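(* For each positive integer $k$, let $z_k$ be the optimal value of the program \[ \max \frac{\sum_{j=1}^k \alpha_j}{f+\sum_{j=1}^k d_j}\ \text{ s.t. } \alpha_j\le\alpha_{j+1}\ (1\le j<k);\ \sqrt{\alpha_j}\le\sqrt{\alpha_l}+\sqrt{d_j}+\sqrt{d_l}\ (1\le j,l\le k);\ \sum_{l=j}^k\max(\alpha_j-d_l,0)\le f\ (1\le j\le k);\ \alpha_j,d_j,f\ge0. \] Then $\sup_{k \ge 1} z_k \le 2.87$.
   Context: The maximum is taken over feasible points with $f+\sum_j d_j>0$. *)

From HB Require Import structures.
From mathcomp Require Import all_boot all_order all_algebra.
From mathcomp Require Import reals.
Set Implicit Arguments. Unset Strict Implicit. Unset Printing Implicit Defensive.
Import Order.TTheory GRing.Theory Num.Theory.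
Local Open Scope ring_scope.

(* Variables alpha_1..alpha_k, d_1..d_k are the values a 1 .. a k, d 1 .. d k
   of functions nat -> R (values outside 1..k are irrelevant). *)
Definition feasible (R : realType) (k : nat) (a d : nat -> R) (f : R) : Prop :=
  [/\ (forall j : nat, (1 <= j)%N -> (j < k)%N -> a j <= a j.+1),
      (forall j l : nat, (1 <= j <= k)%N -> (1 <= l <= k)%N ->
          Num.sqrt (a j) <= Num.sqrt (a l) + Num.sqrt (d j) + Num.sqrt (d l)),
      (forall j : nat, (1 <= j <= k)%N ->
          \sum_(j <= l < k.+1) Num.max (a j - d l) 0 <= f),
      (forall j : nat, (1 <= j <= k)%N -> 0 <= a j /\ 0 <= d j)
    & 0 <= f].

Definition objective (R : realType) (k : nat) (a d : nat -> R) (f : R) : R :=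
  (\sum_(1 <= j < k.+1) a j) / (f + \sum_(1 <= j < k.+1) d j).

From Stdlib Require Import ZArith.
From HB Require Import structures.
From mathcomp Require Import all_boot all_order all_algebra.
From mathcomp Require Import reals.
From mathcomp Require Import ssrZ ring lra.
Set Implicit Arguments. Unset Strict Implicit. Unset Printing Implicit Defensive.
Import Order.TTheory GRing.Theory Num.Theory.
Local Open Scope ring_scope.

(* Weak duality against a finite measure.  Write s_j = sqrt(alpha_j) and
   t_j = sqrt(d_j).  The triangle constraints say s_j - t_j <= s_l + t_l for all
   j, l, so some c >= 0 satisfies (s_l - c)^2 <= d_l for every l.  Suppose a
   measure mu on [0, oo) of mass at most g satisfies, for every u >= 0,
       u^2 <= g (u - 1)^2 + int_{a <= u} (a^2 - (u - 1)^2)_+ dmu(a).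
   Rescaling by c and using (s_l - c)^2 <= d_l gives
       alpha_l <= g d_l + int_{c a <= s_l} ((c a)^2 - d_l)_+ dmu(a).
   For a fixed atom, the indices l that contribute start at the first j with
   c a <= s_j, and (c a)^2 <= alpha_j there, so their sum is at most the j-th
   budget constraint f.  Summing over l gives sum alpha <= g (f + sum d).

   A measure with 1180 atoms and g = 2.87 is verified in exact integer
   arithmetic: on each short interval of u the atoms that are active throughout
   turn the inequality into the nonnegativity of a quadratic, which is decided
   from its values at the endpoints and the position of its vertex. *)

Section Quadratic.
Variable R : realDomainType.
Implicit Types A B C p q x : R.

Definition quad A B C x : R := A * x ^+ 2 + B * x + C.

Lemma quad_ge0_right A B C p x : 0 <= A -> - B <= 2%:R * A * p ->
  0 <= quad A B C p -> p <= x -> 0 <= quad A B C x.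
Proof.
move=> A_ge0 vertex g_p p_le_x.
have -> : quad A B C x = quad A B C p + (x - p) * (A * (x + p) + B) by rewrite /quad; ring.
rewrite addr_ge0 // mulr_ge0 ?subr_ge0 //.
have : A * p <= A * x by rewrite ler_wpM2l.
lra.
Qed.

Lemma quad_ge0_left A B C q x : 0 <= A -> 2%:R * A * q <= - B ->
  0 <= quad A B C q -> x <= q -> 0 <= quad A B C x.
Proof.
have quadN y : quad A B C (- y) = quad A (- B) C y by rewrite /quad; ring.
move=> A_ge0 vertex g_q x_le_q; rewrite -[x]opprK quadN.
apply: (quad_ge0_right (p := - q)) => //; first lra.
  by rewrite -quadN opprK.
by rewrite lerN2.
Qed.

Definition quad_ge0_test A B C p q : bool :=
  [&& 0 <= quad A B C p, 0 <= quad A B C q &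
      [|| A <= 0, B ^+ 2 <= 4%:R * A * C, - B <= 2%:R * A * p | 2%:R * A * q <= - B]].

Lemma quad_ge0_between A B C p q x :
  quad_ge0_test A B C p q -> p <= x <= q -> 0 <= quad A B C x.
Proof.
case/and3P=> g_p g_q shape /andP[p_le_x x_le_q].
have [A_le0|A_gt0] := lerP A 0.
  have [p_lt_q|q_le_p] := ltrP p q; last by have -> : x = p by lra.
  (* concavity: the graph lies above the chord *)
  have chord : (q - p) * quad A B C x = (q - x) * quad A B C p + (x - p) * quad A B C q
      + (- A) * ((q - p) * ((x - p) * (q - x))) by rewrite /quad; ring.
  rewrite -(pmulr_rge0 _ (_ : 0 < q - p)) ?subr_gt0 // chord.
  rewrite !addr_ge0 ?mulr_ge0 ?subr_ge0 //; lra.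
case/or4P: shape => [|disc|vertex|vertex]; first by rewrite leNgt A_gt0.
- have square : 4%:R * A * quad A B C x = (2%:R * A * x + B) ^+ 2 + (4%:R * A * C - B ^+ 2).
    by rewrite /quad; ring.
  rewrite -(pmulr_rge0 _ (_ : 0 < 4%:R * A)) ?mulr_gt0 // square.
  by rewrite addr_ge0 ?sqr_ge0 ?subr_ge0.
- exact: (quad_ge0_right (ltW A_gt0) vertex).
- exact: (quad_ge0_left (ltW A_gt0) vertex).
Qed.
End Quadratic.

Lemma sqr_le_of_norm_le (R : realDomainType) (x y : R) : `|x| <= y -> x ^+ 2 <= y ^+ 2.
Proof. by rewrite ler_norml => /andP[lo hi]; nra. Qed.

Section Atoms.
Variable R : realDomainType.
Implicit Types (mu : seq (R * R)) (c e w : R).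

Definition mass mu : R := foldr (fun x s => x.2 + s) 0 mu.

Definition nonneg_atoms mu : bool := all (fun x => (0 <= x.1) && (0 <= x.2)) mu.

Definition scale_atoms (l k : R) mu := [seq (l * x.1, k * x.2) | x <- mu].

Definition excess mu w e : R :=
  \sum_(x <- mu) x.2 * (if x.1 <= w then Num.max (x.1 ^+ 2 - e) 0 else 0).

Lemma massE mu : mass mu = \sum_(x <- mu) x.2.
Proof. by rewrite /mass; elim: mu => [|x mu /= ->]; rewrite ?big_nil ?big_cons. Qed.

Lemma mass_scale l k mu : mass (scale_atoms l k mu) = k * mass mu.
Proof. by rewrite !massE big_map mulr_sumr. Qed.

Lemma nonneg_atoms_scale l k mu : 0 <= l -> 0 <= k ->
  nonneg_atoms mu -> nonneg_atoms (scale_atoms l k mu).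
Proof.
move=> l_ge0 k_ge0 /allP mu_ge0; apply/allP => _ /mapP[x /mu_ge0 /andP[x1 x2] ->].
by rewrite /= !mulr_ge0.
Qed.

Lemma excess_ge0 mu w e : nonneg_atoms mu -> 0 <= excess mu w e.
Proof.
move=> /allP mu_ge0; rewrite /excess big_seq sumr_ge0 // => x /mu_ge0 /andP[_ m_ge0].
by rewrite mulr_ge0 //; case: ifP => _; rewrite ?le_max ?lexx ?orbT.
Qed.

Lemma excess_scale mu w e (l k : R) : 0 < l ->
  excess (scale_atoms l k mu) (l * w) (l ^+ 2 * e) = k * l ^+ 2 * excess mu w e.
Proof.
move=> l_gt0; rewrite /excess big_map mulr_sumr; apply: eq_bigr => x _ /=.
rewrite ler_pM2l // exprMn -mulrBr; case: ifP => _; last by rewrite !mulr0.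
by rewrite -[X in Num.max _ X](mulr0 (l ^+ 2)) -maxr_pMr ?exprn_ge0 ?ltW //; ring.
Qed.

Lemma excess_shift (g e e' : R) mu w : nonneg_atoms mu -> mass mu <= g -> e <= e' ->
  g * e + excess mu w e <= g * e' + excess mu w e'.
Proof.
move=> /allP mu_ge0 mass_le e_le.
have term_le x : x \in mu -> x.2 * (if x.1 <= w then Num.max (x.1 ^+ 2 - e) 0 else 0)
    <= x.2 * (if x.1 <= w then Num.max (x.1 ^+ 2 - e') 0 else 0) + x.2 * (e' - e).
  move=> /mu_ge0 /andP[_ m_ge0]; rewrite -mulrDr ler_wpM2l //.
  case: ifP => _; last lra.
  rewrite ge_max; apply/andP; split.
    have : x.1 ^+ 2 - e' <= Num.max (x.1 ^+ 2 - e') 0 by rewrite le_max lexx.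
    lra.
  have : 0 <= Num.max (x.1 ^+ 2 - e') 0 by rewrite le_max lexx orbT.
  lra.
have sum_le : excess mu w e <= excess mu w e' + mass mu * (e' - e).
  rewrite /excess massE mulr_suml -big_split /= big_seq [X in _ <= X]big_seq.
  by apply: ler_sum => x; apply: term_le.
have : mass mu * (e' - e) <= g * (e' - e) by rewrite ler_wpM2r ?subr_ge0.
lra.
Qed.
End Atoms.

Lemma foldr_addE (R : nmodType) (I : Type) (F : I -> R) (r : seq I) :
  foldr (fun x s => F x + s) 0 r = \sum_(x <- r) F x.
Proof. by elim: r => [|x r /= ->]; rewrite ?big_nil ?big_cons. Qed.

Section Pieces.
Variable R : realDomainType.
Implicit Types (mu : seq (R * R)) (c p q w : R).

(* Second moments are computed once per atom, so that evaluating a long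
   chain of pieces shares them. *)
Definition weighted mu : seq (R * R * R) := [seq (x, x.2 * x.1 ^+ 2) | x <- mu].

(* On [p, q] every atom with position in [lo, p] has an active term
   m (a^2 - (w - c)^2), so the dual inequality reduces to a quadratic in w. *)
Definition piece_ok (E G c : R) (wmu : seq (R * R * R)) p q : bool :=
  let lo := Num.max `|p - c| `|q - c| in
  let S := [seq x <- wmu | (x.1.1 <= p) && (lo <= x.1.1)] in
  let H := G - foldr (fun x s => x.1.2 + s) 0 S in
  quad_ge0_test (H - E) (- (2%:R * H * c)) (H * c ^+ 2 + foldr (fun x s => x.2 + s) 0 S) p q.

Fixpoint pieces_ok (E G c : R) (wmu : seq (R * R * R)) p (n : nat) : bool :=
  if n is n'.+1 then piece_ok E G c wmu p (p + 1) && pieces_ok E G c wmu (p + 1) n'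
  else true.

Definition tail_ok (E G c p : R) : bool :=
  [&& 0 <= G - E, 2%:R * G * c <= 2%:R * (G - E) * p &
      0 <= quad (G - E) (- (2%:R * G * c)) (G * c ^+ 2) p].

Definition certifies (E G c : R) mu (n : nat) : bool :=
  [&& 0 < E, 0 < c, nonneg_atoms mu, mass mu <= G,
      pieces_ok E G c (weighted mu) 0 n & tail_ok E G c n%:R].

Lemma piece_ok_sound (E G c : R) mu p q w :
  nonneg_atoms mu -> piece_ok E G c (weighted mu) p q -> p <= w <= q ->
  E * w ^+ 2 <= G * (w - c) ^+ 2 + excess mu w ((w - c) ^+ 2).
Proof.
move=> /allP mu_ge0 ok /andP[p_le_w w_le_q].
set lo := Num.max `|p - c| `|q - c|; set e := (w - c) ^+ 2.
set inS := fun x : R * R => (x.1 <= p) && (lo <= x.1).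
have := quad_ge0_between ok (introT andP (conj p_le_w w_le_q)).
rewrite filter_map (@eq_filter _ _ inS) // !foldr_addE !big_map /=.
have inS_term x : inS x ->
    (if x.1 <= w then Num.max (x.1 ^+ 2 - e) 0 else 0) = x.1 ^+ 2 - e.
  case/andP=> x_le_p; rewrite ge_max !ler_norml => /andP[/andP[pc1 pc2] /andP[qc1 qc2]].
  rewrite (le_trans x_le_p p_le_w); apply/max_idPl.
  by rewrite subr_ge0 sqr_le_of_norm_le // ler_norml; lra.
have excess_ge : \sum_(x <- filter inS mu) x.2 * x.1 ^+ 2
    - (\sum_(x <- filter inS mu) x.2) * e <= excess mu w e.
  have -> : \sum_(x <- filter inS mu) x.2 * x.1 ^+ 2 - (\sum_(x <- filter inS mu) x.2) * e
      = \sum_(x <- mu | inS x) x.2 * (if x.1 <= w then Num.max (x.1 ^+ 2 - e) 0 else 0).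
    rewrite mulr_suml -sumrB big_filter.
    by apply: eq_bigr => x /inS_term ->; rewrite mulrBr.
  rewrite /excess [X in _ <= X](bigID inS) /= lerDl.
  rewrite big_seq_cond sumr_ge0 // => x /andP[/mu_ge0 /andP[_ m_ge0] _].
  by rewrite mulr_ge0 //; case: ifP => _; rewrite ?le_max ?lexx ?orbT.
move: excess_ge; rewrite /quad /e; lra.
Qed.

Lemma pieces_ok_sound (E G c : R) mu p n w :
  nonneg_atoms mu -> pieces_ok E G c (weighted mu) p n -> p <= w < p + n%:R ->
  E * w ^+ 2 <= G * (w - c) ^+ 2 + excess mu w ((w - c) ^+ 2).
Proof.
move=> mu_ge0; elim: n p => [|n IH] p /=.
  by move=> _ /andP[p_le_w]; rewrite addr0 => /(le_lt_trans p_le_w); rewrite ltxx.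
case/andP=> piece pieces /andP[p_le_w w_lt].
have [w_le|w_gt] := lerP w (p + 1).
  by apply: piece_ok_sound mu_ge0 piece _; rewrite p_le_w.
by apply: IH pieces _; rewrite ltW //= -addrA -mulrS.
Qed.

Lemma tail_ok_sound (E G c : R) mu p w :
  nonneg_atoms mu -> tail_ok E G c p -> p <= w ->
  E * w ^+ 2 <= G * (w - c) ^+ 2 + excess mu w ((w - c) ^+ 2).
Proof.
move=> mu_ge0 /and3P[A_ge0 vertex g_p] p_le_w.
have : 0 <= quad (G - E) (- (2%:R * G * c)) (G * c ^+ 2) w.
  by apply: quad_ge0_right A_ge0 _ g_p p_le_w; rewrite opprK.
have := excess_ge0 w ((w - c) ^+ 2) mu_ge0.
rewrite /quad; lra.
Qed.
End Pieces.

Section Transport.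
Variables (T U : realDomainType) (f : {rmorphism T -> U}).
Hypothesis f_mono : {mono f : x y / x <= y}.

Let f2 (x : T * T) : U * U := (f x.1, f x.2).

Lemma rmorph_mono_ge0 x : (0 <= f x) = (0 <= x).
Proof. by rewrite -(rmorph0 f) f_mono. Qed.

Lemma rmorph_mono_gt0 x : (0 < f x) = (0 < x).
Proof. by rewrite -(rmorph0 f) (leW_mono f_mono). Qed.

Lemma rmorph_mono_norm x : f `|x| = `|f x|.
Proof.
have [x_ge0|x_lt0] := lerP 0 x; first by rewrite !ger0_norm ?rmorph_mono_ge0.
by rewrite !ltr0_norm ?rmorphN // -(rmorph0 f) (leW_mono f_mono).
Qed.

Lemma rmorph_mono_max x y : f (Num.max x y) = Num.max (f x) (f y).
Proof. by rewrite !maxEle f_mono; case: ifP. Qed.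

Lemma nonneg_atoms_map mu : nonneg_atoms (map f2 mu) = nonneg_atoms mu.
Proof. by rewrite /nonneg_atoms all_map; apply: eq_all => x; rewrite /= !rmorph_mono_ge0. Qed.

Lemma mass_map mu : mass (map f2 mu) = f (mass mu).
Proof. by rewrite !massE big_map rmorph_sum. Qed.

Lemma quad_map A B C x : quad (f A) (f B) (f C) (f x) = f (quad A B C x).
Proof. by rewrite /quad !rmorphD !rmorphM expr2. Qed.

Lemma quad_ge0_test_map A B C p q :
  quad_ge0_test (f A) (f B) (f C) (f p) (f q) = quad_ge0_test A B C p q.
Proof.
rewrite /quad_ge0_test !quad_map !rmorph_mono_ge0 -(rmorph0 f) f_mono.
by rewrite -rmorphXn -rmorphN -!(rmorph_nat f) -!rmorphM !f_mono.
Qed.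

Let f3 (x : T * T * T) : U * U * U := (f2 x.1, f x.2).

Lemma weighted_map mu : weighted (map f2 mu) = map f3 (weighted mu).
Proof. by rewrite /weighted -!map_comp; apply: eq_map => x; rewrite /f3 /= rmorphM rmorphXn. Qed.

Lemma piece_ok_map E G c wmu p q :
  piece_ok (f E) (f G) (f c) (map f3 wmu) (f p) (f q) = piece_ok E G c wmu p q.
Proof.
rewrite /piece_ok filter_map !foldr_addE !big_map /=.
rewrite -!rmorphB -!rmorph_mono_norm -rmorph_mono_max.
under eq_filter => x do rewrite /= !f_mono.
rewrite -quad_ge0_test_map; congr quad_ge0_test;
  by rewrite ?(rmorphB, rmorphN, rmorphD, rmorphM, rmorph_sum, rmorph1).
Qed.

Lemma pieces_ok_map E G c wmu p n :
  pieces_ok (f E) (f G) (f c) (map f3 wmu) (f p) n = pieces_ok E G c wmu p n.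
Proof. by elim: n p => [|n IH] p //=; rewrite -(rmorph1 f) -rmorphD piece_ok_map IH. Qed.

Lemma tail_ok_map E G c p : tail_ok (f E) (f G) (f c) (f p) = tail_ok E G c p.
Proof.
rewrite /tail_ok -rmorphB -(rmorph_nat f) -!rmorphM -rmorphN -rmorphXn -rmorphM.
by rewrite quad_map !rmorph_mono_ge0 f_mono.
Qed.

Lemma certifies_map E G c mu n :
  certifies (f E) (f G) (f c) (map f2 mu) n = certifies E G c mu n.
Proof.
rewrite /certifies !rmorph_mono_gt0 nonneg_atoms_map mass_map f_mono weighted_map.
by rewrite -(rmorph0 f) pieces_ok_map -(rmorph_nat f) tail_ok_map.
Qed.
End Transport.

Section DualCertificate.
Variable R : realFieldType.
Implicit Types (g : R) (mu : seq (R * R)).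

Definition dual_certificate g mu : Prop :=
  [/\ nonneg_atoms mu, mass mu <= g &
      forall u, 0 <= u -> u ^+ 2 <= g * (u - 1) ^+ 2 + excess mu u ((u - 1) ^+ 2)].

(* Beyond the rightmost atom the excess vanishes, leaving u^2 <= g (u - 1)^2. *)
Lemma dual_certificate_ge1 g mu : dual_certificate g mu -> 1 <= g.
Proof.
case=> /allP mu_ge0 _ dual.
pose u := 1 + \big[Num.max/0]_(x <- mu) x.1.
have u_ge1 : 1 <= u by rewrite lerDl bigmax_ge_id.
have excess0 : excess mu u ((u - 1) ^+ 2) = 0.
  rewrite /excess big_seq big1 // => x x_mu.
  have /andP[x_ge0 _] := mu_ge0 x x_mu.
  have x_le : x.1 <= u - 1 by rewrite /u addrC addKr; exact: le_bigmax_seq.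
  case: ifP => _; last by rewrite mulr0.
  suff -> : Num.max (x.1 ^+ 2 - (u - 1) ^+ 2) 0 = 0 by rewrite mulr0.
  by apply/max_idPr; rewrite subr_le0 sqr_le_of_norm_le // ger0_norm.
have := dual u (le_trans ler01 u_ge1); rewrite excess0 addr0.
apply: contraTT; rewrite -!ltNge => g_lt1.
have : g * (u - 1) ^+ 2 <= (u - 1) ^+ 2 by rewrite ler_piMl ?sqr_ge0 // ltW.
nra.
Qed.

Lemma certifies_sound (E G c : R) mu n :
  certifies E G c mu n -> dual_certificate (G / E) (scale_atoms c^-1 E^-1 mu).
Proof.
case/and5P=> E_gt0 c_gt0 mu_ge0 mass_le /andP[pieces tail].
split.
- by rewrite nonneg_atoms_scale ?invr_ge0 ?ltW.
- by rewrite mass_scale mulrC ler_pM2r ?invr_gt0.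
move=> u u_ge0; set w := c * u.
have dual_w : E * w ^+ 2 <= G * (w - c) ^+ 2 + excess mu w ((w - c) ^+ 2).
  have w_ge0 : 0 <= w by rewrite /w mulr_ge0 // ltW.
  have [w_lt|w_ge] := ltrP w n%:R; last exact: tail_ok_sound mu_ge0 tail w_ge.
  by apply: pieces_ok_sound mu_ge0 pieces _; rewrite add0r w_ge0.
have -> : u = c^-1 * w by rewrite /w mulKf ?gt_eqF.
have -> : (c^-1 * w - 1) ^+ 2 = c^-1 ^+ 2 * (w - c) ^+ 2.
  by rewrite -exprMn mulrBr mulVf ?gt_eqF.
rewrite excess_scale ?invr_gt0 //.
have cE_gt0 : 0 < E * c ^+ 2 by rewrite mulr_gt0 ?exprn_gt0.
rewrite -(ler_pM2l cE_gt0).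
have -> : E * c ^+ 2 * (c^-1 * w) ^+ 2 = E * w ^+ 2 by field; rewrite gt_eqF.
by have -> : E * c ^+ 2 * (G / E * (c^-1 ^+ 2 * (w - c) ^+ 2) + E^-1 * c^-1 ^+ 2 *
    excess mu w ((w - c) ^+ 2)) = G * (w - c) ^+ 2 + excess mu w ((w - c) ^+ 2)
  by field; rewrite !gt_eqF.
Qed.

Lemma dual_point_bound g mu (c s e : R) :
  dual_certificate g mu -> 0 <= c -> 0 <= s -> (s - c) ^+ 2 <= e ->
  s ^+ 2 <= g * e + excess (scale_atoms c 1 mu) s e.
Proof.
move=> cert c_ge0 s_ge0 e_ge; have g_ge1 := dual_certificate_ge1 cert.
case: cert => mu_ge0 mass_le dual.
have mu'_ge0 : nonneg_atoms (scale_atoms c 1 mu) by rewrite nonneg_atoms_scale.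
have [c_gt0|c_le0] := ltrP 0 c; last first.
  have c0 : c = 0 by apply/eqP; rewrite eq_le c_le0 c_ge0.
  have {}e_ge : s ^+ 2 <= e by move: e_ge; rewrite c0 subr0.
  have e_ge0 : 0 <= e by apply: le_trans e_ge; exact: sqr_ge0.
  have : e <= g * e by rewrite ler_peMl.
  have := excess_ge0 s e mu'_ge0; lra.
apply: le_trans (excess_shift s _ _ e_ge); rewrite ?mass_scale ?mul1r //.
have s_eq : s = c * (s / c) by rewrite mulrC divfK ?gt_eqF.
have e_eq : (s - c) ^+ 2 = c ^+ 2 * (s / c - 1) ^+ 2 by rewrite -exprMn mulrBr mulr1 -s_eq.
rewrite e_eq {1 3}s_eq excess_scale // mul1r exprMn (mulrCA g) -mulrDr ler_pM2l ?exprn_gt0 //.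
exact: dual (divr_ge0 s_ge0 c_ge0).
Qed.
End DualCertificate.

Section Feasible.
Variables (R : realType) (k : nat) (a d : nat -> R) (f : R).
Hypothesis feas : feasible k a d f.

Let s j := Num.sqrt (a j).
Let t j := Num.sqrt (d j).

Lemma feasible_sqr_sqrt j : (1 <= j <= k)%N -> s j ^+ 2 = a j /\ t j ^+ 2 = d j.
Proof.
by case: feas => _ _ _ nonneg _ /nonneg[a_ge0 d_ge0]; rewrite !sqr_sqrtr.
Qed.

Lemma feasible_center : exists2 c : R, 0 <= c & forall l, (1 <= l <= k)%N -> (s l - c) ^+ 2 <= d l.
Proof.
case: feas => _ triangle _ _ _.
pose c := \big[Num.max/0]_(1 <= j < k.+1) (s j - t j).
exists c; first exact: bigmax_ge_id.
move=> l l_range; have [_ <-] := feasible_sqr_sqrt l_range.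
have c_ge : s l - t l <= c.
  by apply: (le_bigmax_seq 0 l xpredT (fun j => s j - t j)); rewrite // mem_index_iota ltnS.
have c_le : c <= s l + t l.
  rewrite /c big_seq_cond; apply: bigmax_le => [|j /andP[]]; first by rewrite addr_ge0 ?sqrtr_ge0.
  rewrite mem_index_iota ltnS => /triangle /(_ l_range) tri _.
  by have := sqrtr_ge0 (d j); rewrite /s /t; lra.
by rewrite sqr_le_of_norm_le // ler_norml; lra.
Qed.

Lemma feasible_window_sum (b : R) : 0 <= b ->
  \sum_(1 <= l < k.+1) (if b <= s l then Num.max (b ^+ 2 - d l) 0 else 0) <= f.
Proof.
case: feas => _ _ row _ f_ge0 b_ge0.
have [/hasP[j0 j0_range b_le_j0]|/hasPn none] := boolP (has (fun j => b <= s j) (index_iota 1 k.+1)).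
  have ex_j : exists j, (1 <= j < k.+1)%N && (b <= s j).
    by exists j0; rewrite -mem_index_iota j0_range.
  have [j /andP[/andP[j_ge1 j_lt] b_le_j] j_min] := ex_minnP ex_j.
  have b2_le : b ^+ 2 <= a j.
    have [<- _] := feasible_sqr_sqrt (introT andP (conj j_ge1 j_lt)).
    by rewrite sqr_le_of_norm_le // ger0_norm.
  rewrite (big_cat_nat j_ge1 (ltnW j_lt)) /= [X in X + _]big_nat_cond big1 ?add0r.
    apply: le_trans (row j _); last by rewrite j_ge1 -ltnS.
    apply: ler_sum_nat => l _; case: ifP => _; last by rewrite le_max lexx orbT.
    by rewrite ge_max !le_max lerD2r b2_le lexx !orbT.
  move=> l /andP[/andP[l_ge1 l_lt_j] _]; case: ifP => // b_le_l.
  have := j_min l; rewrite l_ge1 b_le_l (ltn_trans l_lt_j j_lt) => /(_ isT).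
  by rewrite leqNgt l_lt_j.
rewrite big_seq_cond big1 // => l /andP[l_range _].
by case: ifP => // b_le_l; have := none l l_range; rewrite b_le_l.
Qed.
End Feasible.

Theorem objective_le_dual_certificate (R : realType) (g : R) mu k (a d : nat -> R) f :
  dual_certificate g mu -> feasible k a d f -> 0 < f + \sum_(1 <= j < k.+1) d j ->
  objective k a d f <= g.
Proof.
move=> cert feas den_gt0; have [mu_ge0 mass_le _] := cert.
have [c c_ge0 center] := feasible_center feas.
set mu' := scale_atoms c 1 mu.
have point l : (1 <= l < k.+1)%N -> a l <= g * d l + excess mu' (Num.sqrt (a l)) (d l).
  move=> l_range; have [sqr_a _] := feasible_sqr_sqrt feas l_range.
  rewrite -{1}sqr_a /mu'.
  by apply: dual_point_bound; rewrite ?sqrtr_ge0 ?center.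
have excess_sum : \sum_(1 <= l < k.+1) excess mu' (Num.sqrt (a l)) (d l) <= mass mu * f.
  rewrite /excess exchange_big /= massE mulr_suml /mu' /scale_atoms big_map.
  rewrite big_seq [X in _ <= X]big_seq; apply: ler_sum => x x_mu /=.
  have /andP[x1_ge0 x2_ge0] := allP mu_ge0 x x_mu.
  rewrite -mulr_sumr mul1r ler_wpM2l //.
  exact: feasible_window_sum feas _ (mulr_ge0 c_ge0 x1_ge0).
rewrite /objective ler_pdivrMr // mulrDr.
apply: le_trans (ler_sum_nat point) _; rewrite big_split /= -mulr_sumr.
have : mass mu * f <= g * f by rewrite ler_wpM2r //; case: feas.
lra.
Qed.

Definition Z2R {R : numDomainType} : {rmorphism Z -> R} := intr \o int_of_Z.

Lemma Z2R_mono (R : realDomainType) : {mono (@Z2R R) : x y / x <= y}.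
Proof.
have int_of_Z_ge0 z : (0 <= int_of_Z z) = (0 <= z) by case: z.
by move=> x y; rewrite /= ler_int -subr_ge0 -rmorphB int_of_Z_ge0 subr_ge0.
Qed.

Fixpoint atoms_from (a : Z) (ms : seq Z) : seq (Z * Z) :=
  if ms is m :: ms' then (a, m) :: atoms_from (a + 1) ms' else [::].

Local Open Scope Z_scope.

(* Positions are in units of 1/800 and masses in units of 10^-8: the atoms sit
   at 503/800, 504/800, ..., 1682/800.  The 2000 unit pieces below cover
   u in [0, 5/2]; beyond that the tail test applies. *)
Definition position_unit : Z := 800.
Definition million : Z := 1000000.
Definition mass_unit : Z := 100000000.
Definition mass_bound : Z := 287000000.

Definition certificate_atoms : seq (Z * Z) := atoms_from 503 [::
  1546670; 1614478; 1591334; 1568743; 1546686; 1525146; 1504106; 1483551; 1463464; 1443832;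
  1424641; 1405875; 1387524; 1369574; 1352013; 1334829; 1318012; 1301550; 1285434; 1269653;
  1254198; 1239060; 1224229; 1209697; 1195457; 1181499; 1167816; 1154401; 1141247; 1128346;
  1115692; 1103279; 1091099; 1079148; 1067419; 1055907; 1044606; 1033510; 1022615; 1011916;
  1001408; 991086; 980946; 970983; 961193; 951572; 942116; 932822; 923684; 914700;
  905867; 897180; 888637; 880233; 871967; 863835; 855834; 847961; 840213; 832587;
  825082; 817694; 810421; 803261; 796210; 789267; 782430; 775696; 769063; 762529;
  756093; 749751; 743503; 737346; 731278; 725299; 719405; 713595; 707869; 702223;
  696657; 691169; 685757; 680421; 675158; 669967; 664848; 659798; 654816; 649901;
  645052; 640268; 635547; 630889; 626292; 621755; 617277; 612857; 608493; 604186;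
  599934; 595736; 591592; 587499; 583458; 579467; 575526; 571633; 567789; 563991;
  560240; 556535; 552875; 549258; 545685; 542155; 538667; 535220; 531814; 528448;
  525121; 521833; 518584; 515371; 512196; 509058; 505955; 502887; 499854; 496856;
  493891; 490959; 488060; 485194; 482359; 479555; 476782; 474039; 471327; 468644;
  465989; 463364; 460767; 458197; 455655; 453140; 450651; 448189; 445753; 443342;
  440957; 438596; 436259; 433947; 431659; 429394; 427152; 424933; 422737; 420563;
  418410; 416280; 414170; 412082; 410015; 407968; 405941; 403935; 401948; 399980;
  398032; 396102; 394192; 392299; 390426; 388570; 386731; 384911; 383108; 381321;
  379552; 377800; 376063; 374344; 372640; 370952; 369280; 367623; 365982; 364356;
  362745; 361148; 359566; 357999; 356445; 354906; 353381; 351869; 350371; 348887;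
  347415; 345957; 344512; 343080; 341660; 340253; 338858; 337475; 336104; 334746;
  333399; 332064; 330740; 329428; 328128; 326838; 325559; 324292; 323035; 321789;
  320553; 319328; 318113; 316909; 315714; 314530; 313355; 312190; 311035; 309890;
  308754; 307628; 306510; 305402; 304303; 303213; 302132; 301060; 299996; 298942;
  297895; 296857; 295828; 294807; 293794; 292789; 291792; 290803; 289822; 288849;
  287883; 286925; 285975; 285032; 284097; 283168; 282248; 281334; 280428; 279528;
  278636; 277750; 276872; 276000; 275135; 274276; 273424; 272579; 271740; 270908;
  270082; 269262; 268448; 267641; 266840; 266045; 265255; 264472; 263695; 262923;
  262158; 261398; 260643; 259895; 259152; 258414; 257682; 256955; 256234; 255518;
  254807; 254102; 253402; 252707; 252017; 251332; 250652; 249977; 249307; 248642;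
  247981; 247326; 246675; 246029; 245387; 244751; 244118; 243491; 242868; 242249;
  241635; 241025; 240420; 239819; 239222; 238629; 238041; 237457; 236877; 236301;
  235729; 235161; 234597; 234037; 233482; 232930; 232382; 231837; 231297; 230761;
  230228; 229699; 229173; 228651; 228133; 227619; 227108; 226601; 226097; 225597;
  225100; 224606; 224116; 223630; 223147; 222667; 222190; 221717; 221247; 220780;
  220316; 219856; 219399; 218945; 218494; 218046; 217601; 217159; 216720; 216285;
  215852; 215422; 214995; 214571; 214150; 213732; 213316; 212904; 212494; 212087;
  211683; 211281; 210883; 210487; 210093; 209703; 209315; 208929; 208546; 208166;
  207788; 207413; 207041; 206671; 206303; 205938; 205575; 205215; 204857; 204502;
  204149; 203799; 203450; 203105; 202761; 202420; 202081; 201744; 201410; 201078;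
  200748; 200420; 200095; 199772; 199451; 199132; 198815; 198500; 198188; 197877;
  197569; 197263; 196958; 196656; 196356; 196058; 195762; 195468; 195176; 194886;
  194597; 194311; 194027; 193745; 193464; 193185; 192909; 192634; 192361; 192090;
  191820; 191553; 191287; 191023; 190761; 190501; 190242; 189986; 189731; 189477;
  189226; 188976; 188728; 188481; 188236; 187993; 187752; 187512; 187274; 187037;
  186802; 186569; 186337; 186107; 185879; 185652; 185426; 185202; 184980; 184759;
  184540; 184322; 184106; 183891; 183678; 183466; 183256; 183047; 182840; 182634;
  182429; 182226; 182024; 181824; 181625; 181428; 181232; 181037; 180844; 180652;
  180461; 180272; 180084; 179898; 179713; 179529; 179346; 179165; 178985; 178806;
  178629; 178453; 178278; 178104; 177932; 177761; 177591; 177422; 177255; 177089;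
  176924; 176760; 176598; 176436; 176276; 176117; 175959; 175803; 175647; 175493;
  175340; 175188; 175037; 174887; 174739; 174591; 174445; 174300; 174156; 174013;
  173871; 173730; 173590; 173452; 173314; 173177; 173042; 172907; 172774; 172642;
  172510; 172380; 172251; 172123; 171996; 171869; 171744; 171620; 171497; 171375;
  171253; 171133; 171014; 170896; 170779; 170662; 170547; 170432; 170319; 170207;
  170095; 169984; 169875; 169766; 169658; 169551; 169445; 169340; 169236; 169133;
  169030; 168929; 168828; 168729; 168630; 168532; 168435; 168338; 168243; 168149;
  168055; 167962; 167870; 167779; 167689; 167600; 167511; 167423; 167337; 167250;
  167165; 167081; 166997; 166914; 166832; 166751; 166671; 166591; 166512; 166434;
  166357; 166281; 166205; 166130; 166056; 165982; 165910; 165838; 165767; 165697;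
  165627; 165558; 165490; 165423; 165356; 165290; 165225; 165161; 165097; 165034;
  164972; 164910; 164849; 164789; 164730; 164671; 164613; 164556; 164500; 164444;
  164388; 164334; 164280; 164227; 164175; 164123; 164072; 164021; 163972; 163923;
  163874; 163826; 163779; 163733; 163687; 163642; 163597; 163554; 163510; 163468;
  163426; 163385; 163344; 163304; 163265; 163226; 163188; 163151; 163114; 163077;
  163042; 163007; 162972; 162939; 162905; 162873; 162841; 162810; 162779; 162749;
  162719; 162690; 162662; 162634; 162607; 162580; 162554; 162528; 162504; 162479;
  162455; 162432; 162410; 162388; 162366; 162345; 162325; 162305; 162286; 162267;
  162249; 162232; 162215; 162198; 162182; 162167; 162152; 162138; 162124; 162111;
  162098; 162086; 162074; 162063; 162053; 162043; 162033; 162024; 162016; 162008;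
  162001; 161994; 161987; 161982; 161976; 161971; 161967; 161963; 161960; 161957;
  161955; 161953; 161952; 161951; 161951; 161951; 161952; 161953; 161955; 161957;
  161959; 161962; 161966; 161970; 161975; 161980; 161985; 161992; 161998; 162005;
  162013; 162020; 162029; 162038; 162047; 162057; 162067; 162078; 162089; 162101;
  162113; 162126; 162139; 162152; 162166; 162181; 162195; 162211; 162226; 162243;
  162259; 162277; 162294; 162312; 162331; 162349; 162369; 162389; 162409; 162429;
  162451; 162472; 162494; 162516; 162539; 162563; 162586; 162610; 162635; 162660;
  162685; 162711; 162737; 162764; 162791; 162819; 162847; 162875; 162904; 162933;
  162963; 162993; 163023; 163054; 163085; 163117; 163149; 163181; 163214; 163248;
  163281; 163315; 163350; 163385; 163420; 163456; 163492; 163528; 163565; 163603;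
  162562; 161471; 160394; 159331; 158281; 157243; 156218; 155206; 154205; 153216;
  152239; 151273; 150317; 149373; 148439; 147515; 146601; 145697; 144802; 143917;
  143041; 142174; 141316; 140467; 139626; 138793; 137969; 137152; 136344; 135543;
  134749; 133963; 133184; 132413; 131648; 130890; 130139; 129395; 128656; 127925;
  127199; 126480; 125767; 125060; 124358; 123663; 122972; 122288; 121609; 120935;
  120267; 119603; 118945; 118292; 117643; 117000; 116361; 115727; 115098; 114473;
  113852; 113236; 112625; 112017; 111414; 110815; 110220; 109629; 109042; 108459;
  107880; 107304; 106732; 106164; 105600; 105039; 104481; 103927; 103376; 102829;
  102285; 101745; 101207; 100673; 100142; 99614; 99089; 98567; 98048; 97532;
  97019; 96508; 96001; 95496; 94994; 94495; 93998; 93504; 93013; 92524;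
  92038; 91554; 91072; 90594; 90117; 89643; 89171; 88702; 88234; 87770;
  87307; 86846; 86388; 85932; 85478; 85026; 84576; 84128; 83683; 83239;
  82797; 82357; 81919; 81483; 81049; 80617; 80186; 79758; 79331; 78906;
  78483; 78061; 77642; 77223; 76807; 76392; 75979; 75568; 75158; 74750;
  74343; 73938; 73534; 73132; 72731; 72332; 71935; 71538; 71144; 70750;
  70359; 69968; 69579; 69191; 68805; 68420; 68036; 67653; 67272; 66892;
  66514; 66136; 65760; 65385; 65012; 64639; 64268; 63898; 63529; 63161;
  62795; 62429; 62065; 61701; 61339; 60978; 60618; 60259; 59901; 59544;
  59188; 58834; 58480; 58127; 57775; 57424; 57074; 56726; 56378; 56031;
  55685; 55339; 54995; 54652; 54309; 53968; 53627; 53287; 52948; 52610;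
  52273; 51937; 51601; 51266; 50932; 50599; 50267; 49935; 49605; 49275;
  48945; 48617; 48289; 47962; 47636; 47311; 46986; 46662; 46338; 46016;
  45694; 45373; 45052; 44732; 44413; 44094; 43777; 43459; 43143; 42827;
  42511; 42197; 41883; 41569; 41256; 40944; 40632; 40321; 40011; 39701;
  39392; 39083; 38775; 38467; 38160; 37853; 37547; 37242; 36937; 36632;
  36329; 36025; 35722; 35420; 35118; 34817; 34516; 34216; 33916; 33616;
  33317; 33019; 32721; 32423; 32126; 31830; 31533; 31238; 30942; 30648;
  30353; 30059; 29765; 29472; 29179; 28887; 28595; 28304; 28012; 27722;
  27431; 27141; 26852; 26562; 26274; 25985; 25697; 25409; 25122; 24835;
  24548; 24262; 23975; 23690; 23404; 23119; 22835; 22550; 22266; 21983;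
  21699; 21416; 21133; 20851; 20569; 20287; 20005; 19724; 19443; 19162;
  18882; 18602; 18322; 18042; 17763; 17484; 17205; 16926; 16648; 16370;
  16092; 15815; 15537; 15260; 14984; 14707; 14431; 14155; 13879; 13603;
  13328; 13053; 12778; 12503; 12228; 11954; 11680; 11406; 11132; 10859;
  10585; 10312; 10039; 9767; 9494; 9222; 8950; 8678; 8406; 8134;
  7863; 7591; 7320; 7049; 6779; 6508; 6237; 5967; 5697; 5427;
  5157; 4887; 4618; 4348; 4079; 3810; 3541; 3272; 3003; 2735;
  2466; 2198; 1929; 1661; 1393; 1125; 858; 590; 322; 55].

Local Close Scope Z_scope.

Lemma certificate_checks :
  certifies mass_unit mass_bound position_unit certificate_atoms 2000.
Proof. by vm_compute. Qed.

Lemma Z2R_mass_ratio (R : realFieldType) :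
  Z2R mass_bound / Z2R mass_unit = 287%:R / 100%:R :> R.
Proof.
have -> : mass_bound = 287%:R * million by [].
have -> : mass_unit = 100%:R * million by [].
have : 0 < Z2R million :> R by rewrite (rmorph_mono_gt0 (@Z2R_mono R)).
rewrite !rmorphM !rmorph_nat => million_gt0.
by field; rewrite gt_eqF.
Qed.

Lemma dual_certificate_287 (R : realFieldType) :
  dual_certificate (287%:R / 100%:R : R)
    (scale_atoms (Z2R position_unit)^-1 (Z2R mass_unit)^-1
       [seq (Z2R x.1, Z2R x.2) | x <- certificate_atoms]).
Proof.
rewrite -Z2R_mass_ratio; apply: (certifies_sound (n := 2000)).
by rewrite (certifies_map (@Z2R_mono R)) certificate_checks.
Qed.

Theorem lemma7 (R : realType) (k : nat) (hk : (1 <= k)%N)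
    (a d : nat -> R) (f : R) :
  feasible k a d f ->
  0 < f + \sum_(1 <= j < k.+1) d j ->
  objective k a d f <= 287%:R / 100%:R.
Proof. exact: objective_le_dual_certificate (dual_certificate_287 R). Qed.
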